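(* Let $\mathcal{X}$, $\mathcal{Y}$, $\mathcal{T}$ be finite sets, let $P_{XY}$ be a joint distribution on $\mathcal{X}\times\mathcal{Y}$, and let $P^\lambda_{T|X}$ be a stochastic mapping (conditional distribution) from $\mathcal{X}$ to $\mathcal{T}$, indexed by a hyperparameter $\lambda$. Let $I^\lambda(T;Y)$ denote the mutual information between $T$ and $Y$ under the joint distribution $P_{XY}(x,y)P^\lambda_{T|X}(t|x)$, and fix $\alpha \ge 0$. Let $\mathcal{D}_{\mathrm{MHT}} = \{(X_i,Y_i)\}_{i=1}^{n_{\mathrm{MHT}}}$ be drawn i.i.d. from $P_{XY}$, and for each $i$ let $T_i \sim P^\lambda_{T|X}(\cdot\mid X_i)$ independently. Let $\hat{I}^\lambda_{\mathcal{D}_{\mathrm{MHT}}}(T;Y)$ be the plug-in estimate $$\hat{I}^\lambda_{\mathcal{D}_{\mathrm{MHT}}}(T;Y)=\sum_{t\in\mathcal{T}}\sum_{y\in\mathcal{Y}}\hat{P}_{TY}(t,y)\log\frac{\hat{P}_{TY}(t,y)}{\hat{P}_T(t)\hat{P}_Y(y)},$$ where $\hat P_{TY}$ is the empirical joint distribution of $\{(T_i,Y_i)\}_{i=1}^{n_{\mathrm{MHT}}}$ and $\hat P_T,\hat P_Y$ are its marginals. For $\epsilon\in(0,1)$ define $$\theta(\epsilon,n_{\mathrm{MHT}})=\sqrt{\frac{2}{n_{\mathrm{MHT}}}\ln\!\left(\frac{2^{|\mathcal{T}||\mathcal{Y}|}-2}{\epsilon}\right)},$$ and $$\Delta I(\theta)=\begin{cases}\frac{\theta}{2}\log\big[(|\mathcal{T}||\mathcal{Y}|-1)(|\mathcal{T}|-1)(|\mathcal{Y}|-1)\big]+3h\!\left(\frac{\theta}{2}\right),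 & \text{if } \theta\le 2-\frac{2}{|\mathcal{T}|},\\ \log|\mathcal{T}|, & \text{if } \theta> 2-\frac{2}{|\mathcal{T}|},\end{cases}$$ with $h(x)=-x\log x-(1-x)\log(1-x)$. Define $$\hat{p}_\lambda=\inf\{\epsilon\in[0,1]:\ \hat{I}^\lambda_{\mathcal{D}_{\mathrm{MHT}}}(T;Y)-\Delta I(\theta(\epsilon,n_{\mathrm{MHT}}))\le\alpha\}.$$ Then $\hat p_\lambda$ is a valid $p$-value for the null hypothesis $\mathcal{H}_\lambda: I^\lambda(T;Y)<\alpha$, i.e., whenever $I^\lambda(T;Y)<\alpha$, we have $\Pr[\hat p_\lambda\le u]\le u$ for all $u\in[0,1]$, where the probability is over the draw of $\mathcal{D}_{\mathrm{MHT}}$ and of the $T_i$.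
   Context: All random variables take values in finite discrete alphabets. The same logarithm base is used in the plug-in estimator and in $\Delta I$ and $h$. *)

From HB Require Import structures.
From mathcomp Require Import all_boot all_order all_algebra.
From mathcomp Require Import classical_sets boolp reals ereal exp.
Set Implicit Arguments. Unset Strict Implicit. Unset Printing Implicit Defensive.
Import Order.TTheory GRing.Theory Num.Theory.
Local Open Scope ring_scope.

Section Defs.
Variable R : realType.

Definition logb (b x : R) : R := ln x / ln b.

Definition is_dist (A : finType) (P : A -> R) : Prop :=
  (forall a, 0 <= P a) /\ \sum_(a : A) P a = 1.

Definition is_channel (A B : finType) (W : A -> B -> R) : Prop :=
  forall a, is_dist (W a).

Definition mutinf (b : R) (T Y : finType) (Q : T -> Y -> R) : R :=
  \sum_(t : T) \sum_(y : Y)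
     (if Q t y == 0 then 0 else
      Q t y * logb b (Q t y / ((\sum_(y' : Y) Q t y') * (\sum_(t' : T) Q t' y)))).

Definition joint_TY (X Y T : finType) (PXY : X -> Y -> R) (W : X -> T -> R)
  : T -> Y -> R := fun t y => \sum_(x : X) PXY x y * W x t.

Definition emp_TY (X Y T : finType) (n : nat) (s : {ffun 'I_n -> X * Y * T})
  : T -> Y -> R := fun t y =>
  #|[set i : 'I_n | ((s i).2 == t) && ((s i).1.2 == y)]|%:R / n%:R.

Definition Ihat (b : R) (X Y T : finType) (n : nat) (s : {ffun 'I_n -> X * Y * T})
  : R := mutinf b (emp_TY s).

Definition hbin (b x : R) : R := - x * logb b x - (1 - x) * logb b (1 - x).

Definition theta (T Y : finType) (eps : R) (n : nat) : R :=
  Num.sqrt (2 / n%:R * ln ((2 ^+ (#|T| * #|Y|) - 2) / eps)).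

Definition DeltaI (b : R) (T Y : finType) (th : R) : R :=
  if th <= 2 - 2 / #|T|%:R then
    th / 2 * logb b ((#|T|%:R * #|Y|%:R - 1) * (#|T|%:R - 1) * (#|Y|%:R - 1))
    + 3 * hbin b (th / 2)
  else logb b #|T|%:R.

(* the p-value  p_hat = inf { eps in (0,1] : Ihat - DeltaI(theta(eps,n)) > alpha },
   with inf of the empty set = +oo *)
Definition phat (b alpha : R) (X Y T : finType) (n : nat)
  (s : {ffun 'I_n -> X * Y * T}) : \bar R :=
  ereal_inf [set (e%:E) | e in
    [set e : R | 0 < e <= 1 /\ Ihat b s - DeltaI b T Y (theta T Y e n) > alpha]].

(* probability of the sample s = ((X_i,Y_i,T_i))_i : (X_i,Y_i) i.i.d. ~ P_XY and
   T_i ~ W(.|X_i) independently *)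
Definition sample_prob (X Y T : finType) (n : nat) (PXY : X -> Y -> R)
  (W : X -> T -> R) (s : {ffun 'I_n -> X * Y * T}) : R :=
  \prod_(i : 'I_n) (PXY (s i).1.1 (s i).1.2 * W (s i).1.1 (s i).2).

End Defs.

From HB Require Import structures.
From mathcomp Require Import all_boot all_order all_algebra.
From mathcomp Require Import classical_sets reals ereal exp.
From mathcomp Require Import sequences normedtype derive realfun.
From mathcomp Require Import ring lra.
Import Order.TTheory GRing.Theory Num.Theory.
Import numFieldNormedType.Exports.
Local Open Scope ring_scope.

Set Implicit Arguments.
Unset Strict Implicit.
Unset Printing Implicit Defensive.

(* Within L1 distance theta of the true law Q of (T, Y), an empirical law Qn has a
   plug-in mutual information exceeding I(T;Y) by at most DeltaI(theta): the continuity
   bound H(P) - H(Q) <= h(d) + d ln (K - 1) for distributions at total variation d on K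
   points, applied to H(T), H(Y) and H(T,Y), together with monotonicity of
   x |-> h(x) + x ln (K - 1) on [0, 1 - 1/K].  Hence under the null, p_hat < e forces
   |Qn - Q|_1 > theta(e).  By the union bound over the 2^(|T||Y|) - 2 proper nonempty
   events B and Hoeffding's inequality for each Qn(B) - Q(B) (Weissman et al.'s L1
   deviation inequality), this has probability at most
   (2^(|T||Y|) - 2) exp (- n theta(e)^2 / 2) = e. *)

Section HoeffdingLemma.
Variable R : realType.

Lemma is_derive_ge0_le (f df : R -> R) (a b : R) : a <= b ->
  (forall x, is_derive x (1 : R) f (df x)) -> (forall x, a <= x <= b -> 0 <= df x) ->
  f a <= f b.
Proof.
rewrite le_eqVlt => /predU1P[-> //|ab] fdf df0.
have fc : {within `[a, b], continuous f}%classic.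
  by apply: derivable_within_continuous => x _; case: (fdf x).
have [c /[!in_itv] /andP[ac cb] fE] := MVT ab (fun x _ => fdf x) fc.
rewrite -subr_ge0 fE; apply: mulr_ge0; last by rewrite subr_ge0 ltW.
by apply: df0; rewrite !ltW.
Qed.

Variable p : R.
Hypotheses (p0 : 0 <= p) (p1 : p <= 1).

Let mgf (x : R) := 1 - p + p * expR x.

(* the success probability of the exponentially tilted Bernoulli law *)
Let tilt (x : R) := p * expR x / mgf x.

Lemma bernoulli_mgf_gt0 x : 0 < 1 - p + p * expR x.
Proof.
have ex := expR_gt0 x; have [p_lt1|p_ge1] := ltrP p 1.
  by have := mulr_ge0 p0 (ltW ex); lra.
have -> : p = 1 by apply/eqP; rewrite eq_le p1 p_ge1.
by rewrite subrr add0r mul1r.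
Qed.

Let mgf_neq0 x : mgf x != 0. Proof. exact/lt0r_neq0/bernoulli_mgf_gt0. Qed.

Let is_derive_mgf x : is_derive x (1 : R) mgf (p * expR x).
Proof.
have := is_deriveD (is_derive_cst (1 - p) x 1) (is_deriveZ p (is_derive_expR x)).
by rewrite add0r.
Qed.

Let is_derive_tilt x : is_derive x (1 : R) tilt (tilt x * (1 - tilt x)).
Proof.
have hV := is_deriveV (mgf_neq0 x) (is_derive_mgf x).
apply: is_derive_eq (is_deriveM (is_deriveZ p (is_derive_expR x)) hV) _.
have d0 := mgf_neq0 x; rewrite /tilt /= /GRing.scale /=.
by field.
Qed.

Let tilt_sub_le c : 0 <= c -> tilt c - p <= c / 4.
Proof.
move=> c0; pose f x := 4^-1 * x - tilt x.
have fd x : is_derive x (1 : R) f (4^-1 - tilt x * (1 - tilt x)).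
  apply: is_derive_eq (is_deriveB (is_deriveZ 4^-1 (is_derive_id x 1)) (is_derive_tilt x)) _.
  by rewrite /GRing.scale /= mulr1.
have fd0 x : 0 <= 4^-1 - tilt x * (1 - tilt x).
  by have := sqr_ge0 (tilt x - 2^-1); nra.
have := is_derive_ge0_le c0 fd (fun x _ => fd0 x).
by rewrite /f /tilt /mgf expR0 mulr1 subrK divr1 mulr0; lra.
Qed.

Let ln_mgf_le l : 0 <= l -> ln (mgf l) <= p * l + 8^-1 * (l * l).
Proof.
move=> l0; pose f x := p * x + 8^-1 * (x * x) - ln (mgf x).
have fd x : is_derive x (1 : R) f (p + x / 4 - tilt x).
  have hl := @is_derive1_comp R (@ln R) mgf x _ _
    (is_derive1_ln (bernoulli_mgf_gt0 x)) (is_derive_mgf x).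
  apply: is_derive_eq (is_deriveB (is_deriveD (is_deriveZ p (is_derive_id x 1))
    (is_deriveZ 8^-1 (is_deriveM (is_derive_id x 1) (is_derive_id x 1)))) hl) _.
  have d0 := mgf_neq0 x; rewrite /mgf in d0; rewrite /GRing.scale /= /tilt /mgf.
  by field.
have fd0 x : 0 <= x <= l -> 0 <= p + x / 4 - tilt x.
  by case/andP=> x0 _; have := tilt_sub_le x0; lra.
have := is_derive_ge0_le l0 fd fd0.
by rewrite /f /mgf expR0 mulr1 subrK ln1; lra.
Qed.

Lemma hoeffding_lemma_bernoulli l : 0 <= l ->
  1 - p + p * expR l <= expR (p * l + 8^-1 * (l * l)).
Proof.
move=> l0; rewrite -ler_ln ?posrE ?expR_gt0 ?bernoulli_mgf_gt0 // expRK.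
exact: ln_mgf_le.
Qed.

End HoeffdingLemma.

Section Entropy.
Variable R : realType.
Implicit Types (x y : R).

Lemma ln_le_subr1 x : 0 < x -> ln x <= x - 1.
Proof. by move=> x0; have := @le_ln1Dx R (x - 1); rewrite addrCA subrr addr0; apply; lra. Qed.

Lemma ler_mul_ln x y : 0 <= x -> x <= y -> x * ln x <= x * ln y.
Proof.
rewrite le_eqVlt => /predU1P[<-|x0] xy; first by rewrite !mul0r.
by rewrite ler_pM2l // ler_ln ?posrE // (lt_le_trans x0).
Qed.

Lemma xlnx_superadditive x y : 0 <= x -> 0 <= y ->
  x * ln x + y * ln y <= (x + y) * ln (x + y).
Proof. by move=> x0 y0; rewrite mulrDl lerD // ler_mul_ln // ?lerDl ?lerDr. Qed.

Lemma xlny_sub_xlnx_le x y : 0 <= x -> 0 <= y -> (0 < x -> 0 < y) ->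
  x * ln y - x * ln x <= y - x.
Proof.
rewrite le_eqVlt => /predU1P[<- y0 _|x0 _ /(_ x0) y_gt0].
  by rewrite !mul0r subrr subr0.
rewrite -mulrBr -ln_div ?posrE //.
have := ler_wpM2l (ltW x0) (ln_le_subr1 (divr_gt0 y_gt0 x0)).
by rewrite mulrBr mulr1 mulrCA divff ?mulr1 ?gt_eqF.
Qed.

Lemma gibbs_inequality (A : finType) (P Q : A -> R) :
  (forall a, 0 <= P a) -> (forall a, 0 <= Q a) -> (forall a, 0 < P a -> 0 < Q a) ->
  \sum_a Q a <= \sum_a P a ->
  \sum_a P a * ln (Q a) <= \sum_a P a * ln (P a).
Proof.
move=> P0 Q0 PQ sQP.
have : \sum_a (P a * ln (Q a) - P a * ln (P a)) <= \sum_a (Q a - P a).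
  by apply: ler_sum => a _; exact: xlny_sub_xlnx_le (P0 a) (Q0 a) (PQ a).
rewrite !sumrB; lra.
Qed.

Lemma ler_sum_term (A : finType) (F : A -> R) a : (forall a, 0 <= F a) ->
  F a <= \sum_a F a.
Proof. by move=> F0; rewrite (bigD1 a) //= lerDl sumr_ge0. Qed.

Lemma is_dist_card_gt0 (A : finType) (P : A -> R) : is_dist P -> (0 < #|A|)%N.
Proof.
case=> _ P1; rewrite lt0n; apply: contra_eqN P1 => /eqP/card0_eq A0.
by rewrite big_pred0 // eq_sym oner_eq0.
Qed.

Lemma exists_le_of_sum_le (A : finType) (P Q : A -> R) : (0 < #|A|)%N ->
  \sum_a P a <= \sum_a Q a -> exists a, P a <= Q a.
Proof.
move=> /card_gt0P[a0 _] sPQ; case: (pickP (fun a => P a <= Q a)) => [a | none]; first by exists a.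
have QP a : Q a < P a by rewrite ltNge none.
suff : \sum_a Q a < \sum_a P a by lra.
rewrite (bigD1 a0) //= [ltRHS](bigD1 a0) //= ltr_leD //.
by apply: ler_sum => a _; exact: ltW.
Qed.

Definition entropy (A : finType) (P : A -> R) := - \sum_a P a * ln (P a).

Definition binary_entropy x := - (x * ln x) - (1 - x) * ln (1 - x).

Lemma sum_xlnx_ge_mass (A : finType) (P : A -> R) (B : {set A}) c :
  (forall a, 0 <= P a) -> (forall a, a \notin B -> P a = 0) -> \sum_a P a = c ->
  c * ln c - c * ln #|B|%:R <= \sum_a P a * ln (P a).
Proof.
move=> P0 PB Pc.
have PinB a : 0 < P a -> a \in B by apply: contraTT => /PB ->; rewrite ltxx.
have cP a : 0 < P a -> 0 < c by move=> Pa; rewrite -Pc; apply: lt_le_trans Pa (ler_sum_term _ _).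
have Bgt0 a : 0 < P a -> 0 < #|B|%:R :> R.
  by move=> /PinB aB; rewrite ltr0n; apply/card_gt0P; exists a.
pose U a := if a \in B then c / #|B|%:R else 0.
have U0 a : 0 <= U a.
  by rewrite /U; case: ifP => // aB; rewrite divr_ge0 -?Pc ?sumr_ge0 ?ler0n.
have sumU : \sum_a U a <= \sum_a P a.
  rewrite Pc /U -big_mkcond /= sumr_const.
  have [-> | Bp] := posnP #|B|; first by rewrite mulr0n -Pc sumr_ge0.
  by rewrite -(mulr_natr (c / _)) divfK // pnatr_eq0 -lt0n.
have UP a : 0 < P a -> 0 < U a.
  by move=> Pa; rewrite /U PinB // divr_gt0 ?(cP a) ?(Bgt0 a).
have sum_lnU : \sum_a P a * ln (U a) = c * ln c - c * ln #|B|%:R.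
  rewrite -{1 3}Pc !mulr_suml -sumrB; apply: eq_bigr => a _.
  have := P0 a; rewrite le0r => /predU1P[->|Pa]; first by rewrite !mul0r subrr.
  by rewrite /U PinB // ln_div ?posrE ?(cP a) ?(Bgt0 a) ?mulrBr.
by rewrite -sum_lnU; exact: gibbs_inequality.
Qed.

Lemma entropy_le_ln_card (A : finType) (P : A -> R) : is_dist P -> entropy P <= ln #|A|%:R.
Proof.
case=> P0 P1; have PT a : a \notin [set: A] -> P a = 0 by rewrite inE.
by have := sum_xlnx_ge_mass P0 PT P1; rewrite ln1 !mul1r cardsT /entropy; lra.
Qed.

Lemma sum_xlnQ_le (A : finType) (P Q : A -> R) c :
  (forall a, 0 <= P a <= Q a) -> \sum_a Q a = 1 -> \sum_a P a = c ->
  \sum_a P a * ln (Q a) + c * ln c <= \sum_a P a * ln (P a).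
Proof.
move=> PQ Q1 Pc; have P0 a : 0 <= P a by case/andP: (PQ a).
have cP a : 0 < P a -> 0 < c by move=> Pa; rewrite -Pc; apply: lt_le_trans Pa (ler_sum_term _ _).
have QP a : 0 < P a -> 0 < Q a by case/andP: (PQ a) => _ /[swap]; apply: lt_le_trans.
have QC0 a : 0 <= Q a * c.
  by rewrite mulr_ge0 -?Pc ?sumr_ge0 // (le_trans (P0 a)); case/andP: (PQ a).
have sum_lnQc : \sum_a P a * ln (Q a * c) = \sum_a P a * ln (Q a) + c * ln c.
  rewrite -{2}Pc mulr_suml -big_split /=; apply: eq_bigr => a _.
  have := P0 a; rewrite le0r => /predU1P[->|Pa]; first by rewrite !mul0r addr0.
  by rewrite lnM ?posrE ?(QP a) ?(cP a) // mulrDr.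
rewrite -sum_lnQc; apply: gibbs_inequality => // [a Pa|].
  exact: mulr_gt0 (QP a Pa) (cP a Pa).
by rewrite -mulr_suml Q1 mul1r Pc.
Qed.

End Entropy.

Section EntropyContinuity.
Variable R : realType.

Definition tv_dist (A : finType) (P Q : A -> R) := (\sum_a `|P a - Q a|) / 2.

Lemma tv_distC (A : finType) (P Q : A -> R) : tv_dist P Q = tv_dist Q P.
Proof. by congr (_ / 2); apply: eq_bigr => a _; rewrite distrC. Qed.

Lemma tv_dist_ge0 (A : finType) (P Q : A -> R) : 0 <= tv_dist P Q.
Proof. by rewrite divr_ge0 ?sumr_ge0. Qed.

Lemma binary_entropy_ge0 (x : R) : 0 <= x <= 1 -> 0 <= binary_entropy x.
Proof.
case/andP=> x0 x1; rewrite /binary_entropy.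
have := mulr_ge0_le0 x0 (ln_le0 x1).
have := mulr_ge0_le0 (_ : 0 <= 1 - x) (ln_le0 (_ : 1 - x <= 1)).
by rewrite subr_ge0 gerBl x0 x1; lra.
Qed.

Lemma entropy_diff_le (A : finType) (P Q : A -> R) : is_dist P -> is_dist Q ->
  entropy P - entropy Q <=
    binary_entropy (tv_dist P Q) + tv_dist P Q * ln (#|A|%:R - 1).
Proof.
move=> distP distQ; have [[P0 P1] [Q0 Q1]] := (distP, distQ).
set d := tv_dist P Q.
pose m a := Num.min (P a) (Q a); pose s a := P a - m a; pose r a := Q a - m a.
have m0 a : 0 <= m a <= Q a by rewrite le_min P0 Q0 ge_min lexx orbT.
have s0 a : 0 <= s a by rewrite subr_ge0 ge_min lexx.
have r0 a : 0 <= r a by rewrite subr_ge0 ge_min lexx orbT.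
have normE a : `|P a - Q a| = s a + r a.
  rewrite /s /r /m; case: (leP (P a) (Q a)) => PQ.
    by rewrite subrr add0r distrC ger0_norm // subr_ge0.
  by rewrite subrr addr0 ger0_norm // subr_ge0 ltW.
have sum_sr : \sum_a s a = \sum_a r a.
  have : \sum_a s a - \sum_a r a = \sum_a P a - \sum_a Q a.
    by rewrite -!sumrB; apply: eq_bigr => a _; rewrite /s /r; ring.
  by rewrite P1 Q1; lra.
have sum_s : \sum_a s a = d.
  by rewrite /d /tv_dist (eq_bigr _ (fun a _ => normE a)) [in RHS]big_split /=; lra.
have sum_m : \sum_a m a = 1 - d.
  by rewrite -P1 -sum_s -sumrB; apply: eq_bigr => a _; rewrite /s; ring.
have sPQ : \sum_a P a <= \sum_a Q a by rewrite P1 Q1.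
have [a0 Pa0] := exists_le_of_sum_le (is_dist_card_gt0 distP) sPQ.
have sa0 : s a0 = 0 by rewrite /s /m (min_idPl Pa0) subrr.
have split_P : \sum_a m a * ln (m a) + \sum_a s a * ln (s a) <= \sum_a P a * ln (P a).
  rewrite -big_split; apply: ler_sum => a _ /=; have /andP[ma _] := m0 a.
  by have := xlnx_superadditive ma (s0 a); rewrite /s addrCA subrr addr0.
have split_Q : \sum_a Q a * ln (Q a) = \sum_a m a * ln (Q a) + \sum_a r a * ln (Q a).
  by rewrite -big_split; apply: eq_bigr => a _ /=; rewrite -mulrDl /r addrC subrK.
have cross_m := sum_xlnQ_le m0 Q1 sum_m.
have cross_r : \sum_a r a * ln (Q a) <= 0.
  apply: sumr_le0 => a _; apply: mulr_ge0_le0 => //; apply: ln_le0.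
  by rewrite -Q1 ler_sum_term.
have s_off_a0 a : a \notin [set~ a0] -> s a = 0 by rewrite !inE negbK => /eqP ->.
have := sum_xlnx_ge_mass s0 s_off_a0 sum_s.
rewrite cardsC1 -subn1 natrB ?(is_dist_card_gt0 distP) //.
rewrite /entropy /binary_entropy; lra.
Qed.

(* the derivative in x, ln ((1 - x) (K - 1) / x), is nonnegative for x <= 1 - 1/K *)
Lemma binary_entropy_mono (K x y : R) : 1 <= K -> 0 <= x -> x <= y -> y <= 1 - K^-1 ->
  binary_entropy x + x * ln (K - 1) <= binary_entropy y + y * ln (K - 1).
Proof.
move=> K1 x0; rewrite le_eqVlt => /predU1P[-> //|xy] yK.
have K0 : 0 < K by lra.
have y0 : 0 < y by lra.
have K_gt1 : 1 < K.
  by rewrite lt_neqAle K1 andbT; apply: contraTneq yK => <-; rewrite invr1; lra.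
have Ki0 : 0 < K^-1 by rewrite invr_gt0.
have conc1 := @xlny_sub_xlnx_le R (1 - x) (1 - y) (ltac:(lra)) (ltac:(lra)) (fun _ => ltac:(lra)).
have conc2 := @xlny_sub_xlnx_le R x y x0 (ltW y0) (fun _ => y0).
have ln_y : ln y <= ln (1 - y) + ln (K - 1).
  rewrite -lnM ?posrE ?ler_ln ?posrE ?mulr_gt0; try lra.
  have := ler_wpM2r (ltW K0) yK; rewrite mulrBl mul1r mulVf ?gt_eqF //; nra.
have : 0 <= (y - x) * (ln (1 - y) + ln (K - 1) - ln y) by apply: mulr_ge0; lra.
rewrite /binary_entropy; nra.
Qed.

End EntropyContinuity.

Section MutualInformation.
Variable R : realType.
Variables T Y : finType.
Implicit Types Q : T -> Y -> R.

Definition pairf Q (p : T * Y) := Q p.1 p.2.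
Definition margT Q (t : T) := \sum_y Q t y.
Definition margY Q (y : Y) := \sum_t Q t y.

Definition mutinf_nat Q := entropy (margT Q) + entropy (margY Q) - entropy (pairf Q).

Lemma pairf_le_margT Q t y : (forall t y, 0 <= Q t y) -> Q t y <= margT Q t.
Proof. by move=> Q0; exact: (@ler_sum_term _ _ (fun y => Q t y)). Qed.

Lemma pairf_le_margY Q t y : (forall t y, 0 <= Q t y) -> Q t y <= margY Q y.
Proof. by move=> Q0; exact: (@ler_sum_term _ _ (fun t => Q t y)). Qed.

Lemma sum_pairf Q (F : T * Y -> R) :
  \sum_p pairf Q p * F p = \sum_t \sum_y Q t y * F (t, y).
Proof. by rewrite pair_bigA; apply: eq_bigr => -[]. Qed.

Lemma sum_pairf_fst Q (F : T -> R) : \sum_p pairf Q p * F p.1 = \sum_t margT Q t * F t.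
Proof. by rewrite sum_pairf; apply: eq_bigr => t _; rewrite mulr_suml. Qed.

Lemma sum_pairf_snd Q (F : Y -> R) : \sum_p pairf Q p * F p.2 = \sum_y margY Q y * F y.
Proof. by rewrite sum_pairf exchange_big; apply: eq_bigr => y _; rewrite mulr_suml. Qed.

Lemma is_dist_margT Q : is_dist (pairf Q) -> is_dist (margT Q).
Proof.
case=> Q0 Q1; split=> [t|]; first by apply: sumr_ge0 => y _; exact: (Q0 (t, y)).
by rewrite -Q1 /margT pair_bigA.
Qed.

Lemma is_dist_margY Q : is_dist (pairf Q) -> is_dist (margY Q).
Proof.
case=> Q0 Q1; split=> [y|]; first by apply: sumr_ge0 => t _; exact: (Q0 (t, y)).
by rewrite -Q1 /margY exchange_big pair_bigA.
Qed.

Lemma mutinf_nat_ge0 Q : is_dist (pairf Q) -> 0 <= mutinf_nat Q.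
Proof.
move=> distQ; have [Q0 Q1] := distQ.
have [[T0 T1] [Y0 Y1]] := (is_dist_margT distQ, is_dist_margY distQ).
have Q0' t y : 0 <= Q t y by exact: (Q0 (t, y)).
pose M p := margT Q p.1 * margY Q p.2.
have M0 p : 0 <= M p by rewrite mulr_ge0.
have T_gt0 p : 0 < pairf Q p -> 0 < margT Q p.1.
  by move=> Qp; rewrite (lt_le_trans Qp) // pairf_le_margT.
have Y_gt0 p : 0 < pairf Q p -> 0 < margY Q p.2.
  by move=> Qp; rewrite (lt_le_trans Qp) // pairf_le_margY.
have M_gt0 p : 0 < pairf Q p -> 0 < M p by move=> Qp; rewrite mulr_gt0 ?T_gt0 ?Y_gt0.
have sumM : \sum_p M p <= \sum_p pairf Q p.
  rewrite Q1 /M -(pair_bigA _ (fun t y => margT Q t * margY Q y)) /=.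
  by under eq_bigr do rewrite -mulr_sumr; rewrite -mulr_suml T1 Y1 mulr1.
have sum_lnM : \sum_p pairf Q p * ln (M p) =
    \sum_t margT Q t * ln (margT Q t) + \sum_y margY Q y * ln (margY Q y).
  rewrite -sum_pairf_fst -sum_pairf_snd -big_split; apply: eq_bigr => p _ /=.
  have := Q0 p; rewrite le0r => /predU1P[->|Qp]; first by rewrite !mul0r addr0.
  by rewrite lnM ?posrE ?T_gt0 ?Y_gt0 // mulrDr.
have := gibbs_inequality Q0 M0 M_gt0 sumM.
by rewrite sum_lnM /mutinf_nat /entropy; lra.
Qed.

Lemma entropy_margT_le Q : is_dist (pairf Q) -> entropy (margT Q) <= entropy (pairf Q).
Proof.
case=> Q0 _; rewrite /entropy lerN2 -(sum_pairf_fst Q (fun t => ln (margT Q t))).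
by apply: ler_sum => p _; rewrite ler_mul_ln // pairf_le_margT // => t y; exact: (Q0 (t, y)).
Qed.

Lemma entropy_margY_le Q : is_dist (pairf Q) -> entropy (margY Q) <= entropy (pairf Q).
Proof.
case=> Q0 _; rewrite /entropy lerN2 -(sum_pairf_snd Q (fun y => ln (margY Q y))).
by apply: ler_sum => p _; rewrite ler_mul_ln // pairf_le_margY // => t y; exact: (Q0 (t, y)).
Qed.

Lemma mutinf_nat_le_ln_cardT Q : is_dist (pairf Q) -> mutinf_nat Q <= ln #|T|%:R.
Proof.
move=> distQ; have := entropy_margY_le distQ.
by have := entropy_le_ln_card (is_dist_margT distQ); rewrite /mutinf_nat; lra.
Qed.

Lemma mutinf_nat_le_ln_cardY Q : is_dist (pairf Q) -> mutinf_nat Q <= ln #|Y|%:R.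
Proof.
move=> distQ; have := entropy_margT_le distQ.
by have := entropy_le_ln_card (is_dist_margY distQ); rewrite /mutinf_nat; lra.
Qed.

Lemma tv_dist_margT Q1 Q2 : tv_dist (margT Q1) (margT Q2) <= tv_dist (pairf Q1) (pairf Q2).
Proof.
rewrite ler_pM2r // -(pair_bigA _ (fun t y => `|Q1 t y - Q2 t y|)) /=.
by apply: ler_sum => t _; rewrite /margT -sumrB; exact: ler_norm_sum.
Qed.

Lemma tv_dist_margY Q1 Q2 : tv_dist (margY Q1) (margY Q2) <= tv_dist (pairf Q1) (pairf Q2).
Proof.
rewrite ler_pM2r // -(pair_bigA _ (fun t y => `|Q1 t y - Q2 t y|)) /= exchange_big.
by apply: ler_sum => y _; rewrite /margY -sumrB; exact: ler_norm_sum.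
Qed.

Lemma mutinf_nat_diff_le_tv Q1 Q2 (d : R) :
  is_dist (pairf Q1) -> is_dist (pairf Q2) -> tv_dist (pairf Q1) (pairf Q2) <= d ->
  d <= 1 - #|T|%:R^-1 -> d <= 1 - #|Y|%:R^-1 ->
  mutinf_nat Q1 - mutinf_nat Q2 <=
    d * (ln (#|T|%:R - 1) + ln (#|Y|%:R - 1) + ln (#|T|%:R * #|Y|%:R - 1))
    + 3 * binary_entropy d.
Proof.
move=> dist1 dist2 tvd dT dY.
have T1 : 1 <= #|T|%:R :> R by rewrite ler1n (is_dist_card_gt0 (is_dist_margT dist1)).
have Y1 : 1 <= #|Y|%:R :> R by rewrite ler1n (is_dist_card_gt0 (is_dist_margY dist1)).
have dTY : d <= 1 - (#|T|%:R * #|Y|%:R)^-1.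
  apply: le_trans dT _; rewrite lerD2l lerN2 invfM ler_piMr ?invr_ge0 ?invf_le1 //; lra.
have hT := entropy_diff_le (is_dist_margT dist1) (is_dist_margT dist2).
have hY := entropy_diff_le (is_dist_margY dist1) (is_dist_margY dist2).
have hTY := entropy_diff_le dist2 dist1.
rewrite card_prod natrM tv_distC in hTY.
have mT := binary_entropy_mono T1 (tv_dist_ge0 _ _) (le_trans (tv_dist_margT Q1 Q2) tvd) dT.
have mY := binary_entropy_mono Y1 (tv_dist_ge0 _ _) (le_trans (tv_dist_margY Q1 Q2) tvd) dY.
have mTY := binary_entropy_mono (_ : 1 <= #|T|%:R * #|Y|%:R) (tv_dist_ge0 _ _) tvd dTY.
move: hT hY hTY mT mY (mTY (ltac:(nra))); rewrite /mutinf_nat; lra.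
Qed.

Lemma ln_le_half_ln_prod (m k : nat) (d : R) : (1 < k < m)%N -> 2^-1 <= d ->
  ln k%:R <= d * ln ((m%:R * k%:R - 1) * (m%:R - 1) * (k%:R - 1)).
Proof.
case/andP=> k1 km d_ge; have [k2 mk1] : 2 <= k%:R :> R /\ k%:R + 1 <= m%:R :> R.
  by rewrite natr1 !ler_nat.
have k_sq : k%:R * k%:R <= (m%:R * k%:R - 1) * (m%:R - 1) * (k%:R - 1) :> R.
  have : 1 <= (m%:R - 1) * (k%:R - 1) :> R by nra.
  rewrite -mulrA; nra.
have ln_k0 : 0 <= ln k%:R :> R by rewrite ln_ge0 //; lra.
have : 2 * ln k%:R <= ln ((m%:R * k%:R - 1) * (m%:R - 1) * (k%:R - 1)) :> R.
  by rewrite mulr2n mulrDl mul1r -lnM ?posrE ?ler_ln ?posrE; try nra.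
nra.
Qed.

Definition DeltaI_nat (th : R) :=
  if th <= 2 - 2 / #|T|%:R then
    th / 2 * ln ((#|T|%:R * #|Y|%:R - 1) * (#|T|%:R - 1) * (#|Y|%:R - 1))
    + 3 * binary_entropy (th / 2)
  else ln #|T|%:R.

Lemma mutinf_nat_diff_le Q1 Q2 th : is_dist (pairf Q1) -> is_dist (pairf Q2) ->
  tv_dist (pairf Q1) (pairf Q2) <= th / 2 -> mutinf_nat Q1 - mutinf_nat Q2 <= DeltaI_nat th.
Proof.
move=> dist1 dist2 tvd; have I2 := mutinf_nat_ge0 dist2.
rewrite /DeltaI_nat; case: ifP => [th_small|_]; last first.
  by have := mutinf_nat_le_ln_cardT dist1; lra.
set d := th / 2 in tvd *; set L := ln _.
have Tgt0 : (0 < #|T|)%N := is_dist_card_gt0 (is_dist_margT dist1).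
have Ygt0 : (0 < #|Y|)%N := is_dist_card_gt0 (is_dist_margY dist1).
have dT : d <= 1 - #|T|%:R^-1 by move: th_small; rewrite /d mulrC; lra.
have d0 : 0 <= d := le_trans (tv_dist_ge0 _ _) tvd.
have h0 : 0 <= binary_entropy d.
  by rewrite binary_entropy_ge0 // d0 (le_trans dT) // gerDl oppr_le0 invr_ge0.
(* ln vanishes on nonpositive arguments, so L = 0 when #|T| = 1 or #|Y| = 1 *)
have [T1|T_gt1] := eqVneq #|T| 1%N.
  have := mutinf_nat_le_ln_cardT dist1.
  by rewrite /L T1 ln1 subrr mulr0 mul0r ln0 // mulr0; lra.
have [Y1|Y_gt1] := eqVneq #|Y| 1%N.
  have := mutinf_nat_le_ln_cardY dist1.
  by rewrite /L Y1 ln1 subrr mulr0 ln0 // mulr0; lra.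
have T2 : 2 <= #|T|%:R :> R by rewrite ler_nat ltn_neqAle eq_sym T_gt1 Tgt0.
have Y2 : 2 <= #|Y|%:R :> R by rewrite ler_nat ltn_neqAle eq_sym Y_gt1 Ygt0.
have [dY|Yd] := leP d (1 - #|Y|%:R^-1).
  have := mutinf_nat_diff_le_tv dist1 dist2 tvd dT dY.
  have TY3 : 3 <= #|T|%:R * #|Y|%:R - 1 :> R by nra.
  by rewrite /L !lnM ?posrE ?mulr_gt0; lra.
have YT : (1 < #|Y| < #|T|)%N.
  rewrite ltn_neqAle eq_sym Y_gt1 Ygt0 -(ltr_nat R) -ltf_pV2 ?posrE ?ltr0n //; lra.
have d_half : 2^-1 <= d.
  have : #|Y|%:R^-1 <= 2^-1 :> R by rewrite lef_pV2 ?posrE; lra.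
  lra.
have := ln_le_half_ln_prod YT d_half.
by have := mutinf_nat_le_ln_cardY dist1; rewrite /L; lra.
Qed.

End MutualInformation.

Section ChangeOfBase.
Variable R : realType.
Variables (T Y : finType) (b : R).

Lemma mutinfE (Q : T -> Y -> R) : (forall t y, 0 <= Q t y) ->
  mutinf b Q = mutinf_nat Q / ln b.
Proof.
move=> Q0; rewrite /mutinf /mutinf_nat /entropy.
pose F p := pairf Q p * ln (pairf Q p) - pairf Q p * ln (margT Q p.1)
            - pairf Q p * ln (margY Q p.2).
transitivity ((\sum_p F p) / ln b); last first.
  rewrite !sumrB (sum_pairf_fst Q (fun t => ln (margT Q t))).
  by rewrite (sum_pairf_snd Q (fun y => ln (margY Q y))); congr (_ / _); ring.
rewrite mulr_suml pair_bigA; apply: eq_bigr => -[t y] _.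
rewrite /F /pairf /=; case: eqP => [->|/eqP Qn0]; first by rewrite !mul0r !subr0 mul0r.
have Qp : 0 < Q t y by rewrite lt0r Qn0 Q0.
have Tp : 0 < margT Q t by rewrite (lt_le_trans Qp) ?pairf_le_margT.
have Yp : 0 < margY Q y by rewrite (lt_le_trans Qp) ?pairf_le_margY.
rewrite -/(margT Q t) -/(margY Q y) /logb ln_div ?posrE ?mulr_gt0 // lnM ?posrE //.
by rewrite mulrA; congr (_ / _); ring.
Qed.

Lemma DeltaIE th : DeltaI b T Y th = DeltaI_nat T Y th / ln b.
Proof. by rewrite /DeltaI /DeltaI_nat /binary_entropy /hbin /logb; case: ifP => _ //; ring. Qed.

End ChangeOfBase.

Section Sampling.
Variable R : realType.
Variables (A : finType) (pi : A -> R) (n : nat).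
Hypotheses (pi0 : forall a, 0 <= pi a) (pi1 : \sum_a pi a = 1).
Local Notation sample := {ffun 'I_n -> A}.

Definition Pr (E : pred sample) : R := \sum_(s | E s) \prod_i pi (s i).

Lemma sum_prod_ffun (G : A -> R) : \sum_(s : sample) \prod_i G (s i) = (\sum_a G a) ^+ n.
Proof. by rewrite -(bigA_distr_bigA (fun _ a => G a)) prodr_const card_ord. Qed.

Lemma prod_pi_ge0 (s : sample) : 0 <= \prod_i pi (s i).
Proof. exact: prodr_ge0. Qed.

Lemma le_Pr (E F : pred sample) : (forall s, E s -> F s) -> Pr E <= Pr F.
Proof.
move=> EF; rewrite /Pr [leLHS]big_mkcond [leRHS]big_mkcond /=; apply: ler_sum => s _.
by case: ifP => [/EF -> //|_]; case: ifP => // _; exact: prod_pi_ge0.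
Qed.

Lemma Pr_le1 (E : pred sample) : Pr E <= 1.
Proof.
by apply: le_trans (le_Pr (F := predT) _) _ => //; rewrite /Pr sum_prod_ffun pi1 expr1n.
Qed.

Lemma Pr_le_expectation (E : pred sample) (g : sample -> R) :
  (forall s, 0 <= g s) -> (forall s, E s -> 1 <= g s) ->
  Pr E <= \sum_(s : sample) \prod_i pi (s i) * g s.
Proof.
move=> g0 g1; rewrite /Pr [leRHS](bigID E) /= -[leLHS]addr0 lerD //.
  by apply: ler_sum => s Es; rewrite -[leLHS]mulr1 ler_wpM2l ?prod_pi_ge0 ?g1.
by apply: sumr_ge0 => s _; rewrite mulr_ge0 ?prod_pi_ge0.
Qed.

Lemma Pr_union_bound (I : finType) (P : pred I) (E : pred sample) (F : I -> pred sample) :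
  (forall s, E s -> exists2 i, P i & F i s) -> Pr E <= \sum_(i | P i) Pr (F i).
Proof.
move=> EF; pose g s := \sum_(i | P i) ((F i s)%:R : R).
have g0 s : 0 <= g s by rewrite sumr_ge0.
have g1 s : E s -> 1 <= g s.
  by case/EF=> i Pi Fis; rewrite /g (bigD1 i) //= Fis lerDl sumr_ge0.
apply: le_trans (Pr_le_expectation g0 g1) _; rewrite /g /Pr.
under eq_bigr do rewrite mulr_sumr; rewrite exchange_big /=.
apply: ler_sum => i _; rewrite [leRHS]big_mkcond; apply: ler_sum => s _.
by case: (F i s); rewrite ?mulr1 ?mulr0.
Qed.

Lemma sum_mgf_count (f : A -> bool) (l : R) :
  \sum_(s : sample) \prod_i pi (s i) * expR (l * \sum_i (f (s i))%:R) =
  (1 - \sum_a pi a * (f a)%:R + (\sum_a pi a * (f a)%:R) * expR l) ^+ n.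
Proof.
under eq_bigr do rewrite mulr_sumr expR_sum -big_split /=.
rewrite (sum_prod_ffun (fun a => pi a * expR (l * (f a)%:R))); congr (_ ^+ n).
transitivity (\sum_a (pi a + (expR l - 1) * (pi a * (f a)%:R))).
  by apply: eq_bigr => a _; case: (f a); rewrite /= ?mulr1 ?mulr0 ?expR0; ring.
by rewrite big_split /= -mulr_sumr pi1; ring.
Qed.

Lemma hoeffding (f : A -> bool) (t : R) : (0 < n)%N -> 0 <= t ->
  Pr (fun s => t < (\sum_i (f (s i))%:R) / n%:R - \sum_a pi a * (f a)%:R)
    <= expR (- (2 * n%:R * (t * t))).
Proof.
move=> n0 t0; set p := \sum_a pi a * (f a)%:R.
have p0 : 0 <= p by rewrite sumr_ge0 // => a _; rewrite mulr_ge0.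
have p1 : p <= 1 by rewrite -pi1 ler_sum // => a _; case: (f a); rewrite ?mulr1 ?mulr0.
have np : 0 < n%:R :> R by rewrite ltr0n.
pose S (s : sample) := \sum_i ((f (s i))%:R : R).
(* Chernoff's bound, with the exponent 4 t that optimises Hoeffding's lemma *)
pose g s := expR (- (4 * t * n%:R * (p + t))) * expR (4 * t * S s).
have g0 s : 0 <= g s by rewrite mulr_ge0 ?expR_ge0.
have g1 s : t < S s / n%:R - p -> 1 <= g s.
  rewrite ltrBrDr ltr_pdivlMr // => St; rewrite /g -expRD.
  by apply: le_trans (expR_ge1Dx _); rewrite lerDl; nra.
apply: le_trans (Pr_le_expectation g0 g1) _.
under eq_bigr do rewrite /g /S mulrCA; rewrite -mulr_sumr sum_mgf_count -/p.
have t4 : 0 <= 4 * t by rewrite mulr_ge0.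
have := lerXn2r n (ltW (bernoulli_mgf_gt0 p0 p1 (4 * t))) (expR_ge0 _)
  (hoeffding_lemma_bernoulli p0 p1 t4).
rewrite -expRM_natl => mgf_n; apply: le_trans (ler_wpM2l (expR_ge0 _) mgf_n) _.
by rewrite -expRD ler_expR; lra.
Qed.

End Sampling.

Section Deviation.
Variable R : realType.

Lemma sum_proper_nonempty_sets (Z : finType) (c : R) : (0 < #|Z|)%N ->
  \sum_(B : {set Z} | (B != finset.set0) && (B != finset.setT)) c = c * (2 ^+ #|Z| - 2).
Proof.
move=> Z0; have [z _] := card_gt0P Z0.
have T0 : finset.setT != finset.set0 :> {set Z}.
  by apply/set0Pn; exists z; rewrite inE.
have all : \sum_(B : {set Z}) c = c * 2 ^+ #|Z|.
  rewrite sumr_const -[#|{set Z}|]cardsT -powersetT card_powerset cardsT.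
  by rewrite -[c *+ _]mulr_natr natrX.
by rewrite (bigD1 finset.set0) //= (bigD1 finset.setT) //= in all; lra.
Qed.

Lemma sum_normB_excess (Z : finType) (P Q : Z -> R) : \sum_z P z = \sum_z Q z ->
  \sum_z `|P z - Q z| = 2 * \sum_(z in [set z | Q z < P z]) (P z - Q z).
Proof.
set B := [set z | Q z < P z].
move/eqP; rewrite -subr_eq0 -sumrB (bigID (mem B)) /= => /eqP sum0.
rewrite (bigID (mem B)) /= [X in X + _](eq_bigr (fun z => P z - Q z)); last first.
  by move=> z; rewrite inE => /ltW; rewrite -subr_ge0 => /ger0_norm.
rewrite [X in _ + X](eq_bigr (fun z => - (P z - Q z))) ?sumrN; first lra.
by move=> z; rewrite inE -leNgt -subr_le0 => /ler0_norm.
Qed.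

Lemma sum_eq_indicator (Z : finType) (B : {set Z}) x :
  \sum_(z in B) ((x == z)%:R : R) = (x \in B)%:R.
Proof.
have [xB|xNB] := boolP (x \in B).
  by rewrite (bigD1 x) //= eqxx big1 ?addr0 // => z /andP[_ /negbTE]; rewrite eq_sym => ->.
by rewrite big1 // => z zB; case: eqP => // xz; rewrite xz zB in xNB.
Qed.

Lemma sum_mul_eq (I : finType) (F : I -> R) j : \sum_i F i * (i == j)%:R = F j.
Proof. by rewrite (bigD1 j) //= eqxx mulr1 big1 ?addr0 // => i /negbTE ->; rewrite mulr0. Qed.

Variables (A Z : finType) (pi : A -> R) (g : A -> Z) (n : nat).
Hypotheses (pi0 : forall a, 0 <= pi a) (pi1 : \sum_a pi a = 1) (n0 : (0 < n)%N).

Definition emp_law (s : {ffun 'I_n -> A}) (z : Z) : R :=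
  (\sum_i ((g (s i) == z)%:R : R)) / n%:R.

Definition push_law (z : Z) : R := \sum_a pi a * (g a == z)%:R.

Lemma emp_law_set s (B : {set Z}) :
  \sum_(z in B) emp_law s z = (\sum_i ((g (s i) \in B)%:R : R)) / n%:R.
Proof.
rewrite -mulr_suml exchange_big; congr (_ / _).
by apply: eq_bigr => i _; exact: sum_eq_indicator.
Qed.

Lemma push_law_set (B : {set Z}) :
  \sum_(z in B) push_law z = \sum_a pi a * (g a \in B)%:R.
Proof. by rewrite exchange_big; apply: eq_bigr => a _; rewrite -mulr_sumr sum_eq_indicator. Qed.

Lemma sum_emp_law s : \sum_z emp_law s z = 1.
Proof.
rewrite -(eq_bigl _ _ (@finset.in_setT Z)) emp_law_set.
under eq_bigr do rewrite inE.
by rewrite sumr_const card_ord -[_ *+ n]mulr_natr mul1r divff // pnatr_eq0 -lt0n.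
Qed.

Lemma sum_push_law : \sum_z push_law z = 1.
Proof.
rewrite -(eq_bigl _ _ (@finset.in_setT Z)) push_law_set -[RHS]pi1.
by apply: eq_bigr => a _; rewrite inE mulr1.
Qed.

Lemma l1_deviation th : 0 <= th ->
  Pr pi (fun s => th < \sum_z `|emp_law s z - push_law z|)
    <= (2 ^+ #|Z| - 2) * expR (- (n%:R * (th * th) / 2)).
Proof.
move=> th0; have [a0 _] := card_gt0P (is_dist_card_gt0 (conj pi0 pi1)).
pose dev (B : {set Z}) (s : {ffun 'I_n -> A}) :=
  (\sum_i ((g (s i) \in B)%:R : R)) / n%:R - \sum_a pi a * (g a \in B)%:R.
have devE B s : dev B s = \sum_(z in B) (emp_law s z - push_law z).
  by rewrite sumrB emp_law_set push_law_set.
have cover s : th < \sum_z `|emp_law s z - push_law z| ->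
    exists2 B, (B != finset.set0) && (B != finset.setT) & th / 2 < dev B s.
  rewrite sum_normB_excess ?sum_emp_law ?sum_push_law // => th_lt.
  exists [set z | push_law z < emp_law s z]; last by rewrite devE; lra.
  apply/andP; split; apply: contraTneq th_lt => ->.
    by rewrite big_set0; lra.
  by rewrite (eq_bigl _ _ (@finset.in_setT Z)) sumrB sum_emp_law sum_push_law; lra.
apply: le_trans (Pr_union_bound pi0 cover) _.
rewrite [leRHS]mulrC -sum_proper_nonempty_sets; last by apply/card_gt0P; exists (g a0).
apply: ler_sum => B _; apply: le_trans (hoeffding pi0 pi1 (fun a => g a \in B) n0 _) _.
  by rewrite divr_ge0.
by rewrite ler_expR; lra.
Qed.

End Deviation.

Section Model.
Variable R : realType.
Variables (X Y T : finType) (PXY : X -> Y -> R) (W : X -> T -> R).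
Hypotheses (distP : is_dist (fun xy : X * Y => PXY xy.1 xy.2)) (chanW : is_channel W).

Definition draw_law (a : X * Y * T) : R := PXY a.1.1 a.1.2 * W a.1.1 a.2.
Definition obs (a : X * Y * T) : T * Y := (a.2, a.1.2).

Lemma draw_law_ge0 a : 0 <= draw_law a.
Proof. by rewrite mulr_ge0 //; [exact: distP.1 (a.1.1, a.1.2) | exact: (chanW _).1]. Qed.

Lemma sum_draw_law : \sum_a draw_law a = 1.
Proof.
rewrite -(pair_bigA _ (fun xy t => draw_law (xy, t))) -[RHS]distP.2.
by apply: eq_bigr => xy _; rewrite /draw_law /= -mulr_sumr (chanW _).2 mulr1.
Qed.

Lemma joint_TY_push_law t y : joint_TY PXY W t y = push_law draw_law obs (t, y).
Proof.
pose F a := draw_law a * (obs a == (t, y))%:R.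
rewrite /push_law -/F -(pair_bigA _ (fun xy t' => F (xy, t'))).
rewrite -(pair_bigA _ (fun x y' => \sum_t' F (x, y', t'))).
apply: eq_bigr => x _ /=; rewrite -(sum_mul_eq (fun y' => PXY x y' * W x t) y).
apply: eq_bigr => y' _; rewrite -(sum_mul_eq (fun t' => PXY x y' * W x t') t) mulr_suml.
apply: eq_bigr => t' _; rewrite /F /draw_law /obs /= xpair_eqE.
by case: (t' == t); case: (y' == y); rewrite ?mulr1 ?mulr0 ?mul0r.
Qed.

Lemma emp_TY_emp_law n (s : {ffun 'I_n -> X * Y * T}) t y :
  emp_TY R s t y = emp_law R obs s (t, y).
Proof.
rewrite /emp_TY /emp_law -sum1_card natr_sum big_mkcond /=; congr (_ / _).
by apply: eq_bigr => i _; rewrite inE /obs xpair_eqE; case: (_ && _).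
Qed.

Lemma is_dist_joint_TY : is_dist (pairf (joint_TY PXY W)).
Proof.
split=> [[t y]|].
  by rewrite /pairf joint_TY_push_law sumr_ge0 // => a _; rewrite mulr_ge0 ?draw_law_ge0.
rewrite -(sum_push_law obs sum_draw_law); apply: eq_bigr => -[t y] _.
exact: joint_TY_push_law.
Qed.

Lemma is_dist_emp_TY n (s : {ffun 'I_n -> X * Y * T}) : (0 < n)%N ->
  is_dist (pairf (emp_TY R s)).
Proof.
move=> n0; split=> [[t y]|]; first by rewrite /pairf emp_TY_emp_law divr_ge0 ?sumr_ge0.
rewrite -(sum_emp_law R obs n0 s); apply: eq_bigr => -[t y] _.
exact: emp_TY_emp_law.
Qed.

Lemma l1_emp_TY n (s : {ffun 'I_n -> X * Y * T}) :
  2 * tv_dist (pairf (emp_TY R s)) (pairf (joint_TY PXY W)) =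
  \sum_z `|emp_law R obs s z - push_law draw_law obs z|.
Proof.
rewrite /tv_dist mulrC divfK ?pnatr_eq0 //; apply: eq_bigr => -[t y] _.
by rewrite /pairf emp_TY_emp_law joint_TY_push_law.
Qed.

End Model.

Arguments obs {X Y T} a.

Section Theta.
Variable R : realType.
Variables (T Y : finType) (n : nat).

Lemma theta_anti (e e' : R) : 0 < e -> e <= e' -> theta T Y e' n <= theta T Y e n.
Proof.
move=> e0 ee'; have e'0 := lt_le_trans e0 ee'.
rewrite /theta ler_wsqrtr // ler_wpM2l ?divr_ge0 //; set c := 2 ^+ _ - 2.
have [c0|c_gt0] := lerP c 0; first by rewrite !ln0 // pmulr_lle0 // invr_gt0.
by rewrite ler_ln ?posrE ?divr_gt0 // ler_pM2l // lef_pV2.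
Qed.

Lemma theta_tail_le (e : R) : (0 < #|T| * #|Y|)%N -> (0 < n)%N -> 0 < e <= 1 ->
  (2 ^+ (#|T| * #|Y|) - 2) * expR (- (n%:R * (theta T Y e n * theta T Y e n) / 2)) <= e.
Proof.
move=> k0 n0 /andP[e0 e1]; have [k1|k2] := leqP (#|T| * #|Y|) 1.
  have k_eq1 : (#|T| * #|Y| = 1)%N by apply/eqP; rewrite eqn_leq k1 k0.
  by rewrite k_eq1 expr1 subrr mul0r ltW.
set c := 2 ^+ _ - 2; have c2 : 2 <= c.
  rewrite /c -(subnK k2) exprD expr2.
  have : 1 <= 2 ^+ (#|T| * #|Y| - 2) :> R by apply: exprn_ege1; lra.
  nra.
have nR : n%:R != 0 :> R by rewrite pnatr_eq0 -lt0n.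
rewrite -expr2 /theta -/c sqr_sqrtr; last by rewrite mulr_ge0 ?divr_ge0 ?ln_ge0 // ler_pdivlMr; lra.
have -> : n%:R * (2 / n%:R * ln (c / e)) / 2 = ln (c / e) by field.
have c0 : 0 < c by lra.
rewrite expRN lnK ?posrE ?divr_gt0 //.
by have -> : c / (c / e) = e by field; rewrite !gt_eqF.
Qed.

End Theta.

Section PValue.
Variable R : realType.
Variables (X Y T : finType) (PXY : X -> Y -> R) (W : X -> T -> R) (b alpha : R) (n : nat).
Hypotheses (b1 : 1 < b) (distP : is_dist (fun xy : X * Y => PXY xy.1 xy.2)).
Hypotheses (chanW : is_channel W) (n0 : (0 < n)%N).
Hypothesis H0 : mutinf b (joint_TY PXY W) < alpha.

Lemma theta_lt_l1_of_phat_lt (s : {ffun 'I_n -> X * Y * T}) (e' : R) :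
  (phat b alpha s < e'%:E)%E ->
  theta T Y e' n < 2 * tv_dist (pairf (emp_TY R s)) (pairf (joint_TY PXY W)).
Proof.
case/ereal_inf_lt => _ [e [/andP[e0 _] reject] <-]; rewrite lte_fin => ee'.
apply: le_lt_trans (theta_anti T Y n e0 (ltW ee')) _; rewrite ltNge; apply/negP => close.
have [distE distJ] := (is_dist_emp_TY R s n0, is_dist_joint_TY distP chanW).
have tv_le : tv_dist (pairf (emp_TY R s)) (pairf (joint_TY PXY W)) <= theta T Y e n / 2.
  by rewrite ler_pdivlMr // mulrC.
have := mutinf_nat_diff_le distE distJ tv_le.
have lnb_inv : 0 < (ln b)^-1 by rewrite invr_gt0 ln_gt0.
rewrite -(ler_pM2r lnb_inv) => diff.
move: reject H0; rewrite /Ihat DeltaIE !mutinfE => [| t y | t y]; first lra.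
  exact: distJ.1 (t, y).
exact: distE.1 (t, y).
Qed.

End PValue.

Theorem proposition1 (R : realType) (X Y T : finType) (Lambda : Type)
  (PXY : X -> Y -> R) (W : Lambda -> X -> T -> R) (lam : Lambda)
  (b alpha : R) (n : nat) :
  1 < b -> 0 <= alpha -> (0 < n)%N ->
  is_dist (fun xy : X * Y => PXY xy.1 xy.2) ->
  (forall l, is_channel (W l)) ->
  mutinf b (joint_TY PXY (W lam)) < alpha ->
  forall u : R, 0 <= u <= 1 ->
    \sum_(s : {ffun 'I_n -> X * Y * T} | (phat b alpha s <= u%:E)%E)
        sample_prob PXY (W lam) s <= u.
Proof.
(* the argument works for every alpha *)
move=> b1 _ n0 distP chanW H0 u /andP[u0 _].
have [law0 law1] := (draw_law_ge0 distP (chanW lam), sum_draw_law distP (chanW lam)).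
change (Pr (draw_law PXY (W lam))
  (fun s : {ffun 'I_n -> X * Y * T} => (phat b alpha s <= u%:E)%E) <= u).
apply/ler_addgt0Pr => eps; rewrite -(ltrDl u); move: (u + eps) => e u_lt_e.
have [e_gt1|e_le1] := ltrP 1 e.
  exact: le_trans (Pr_le1 law0 law1 _) (ltW e_gt1).
have TY0 : (0 < #|T| * #|Y|)%N.
  by rewrite -card_prod (is_dist_card_gt0 (is_dist_joint_TY distP (chanW lam))).
have far (s : {ffun 'I_n -> X * Y * T}) : (phat b alpha s <= u%:E)%E -> theta T Y e n <
    \sum_z `|emp_law R obs s z - push_law (draw_law PXY (W lam)) obs z|.
  move=> phat_le; rewrite -l1_emp_TY.
  apply: (theta_lt_l1_of_phat_lt b1 distP (chanW lam) n0 H0).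
  by apply: le_lt_trans phat_le _; rewrite lte_fin.
apply: le_trans (le_Pr law0 far) _.
apply: le_trans (l1_deviation obs law0 law1 n0 (sqrtr_ge0 _)) _.
by rewrite card_prod theta_tail_le // (le_lt_trans u0 u_lt_e).
Qed.
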